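(* Let $R,L,C,V_{dc},T>0$, and let $A_1,A_2,\boldsymbol{b}_1$ and the switched system be as in the context. Then the matrix $I-\mathrm{e}^{\frac{T}{2}A_2}\mathrm{e}^{\frac{T}{2}A_1}$ is invertible, and the system has a unique $T$-periodic continuous solution $\boldsymbol{x}_p$. This solution is given on one period by $$\boldsymbol{x}_p(t)=\begin{cases}\mathrm{e}^{tA_1}\boldsymbol{x}_p(0)+A_1^{-1}(\mathrm{e}^{tA_1}-I)\boldsymbol{b}_1, & t\in[0,\tfrac T2],\\[1mm] \mathrm{e}^{(t-\frac T2)A_2}\boldsymbol{x}_p(\tfrac T2), & t\in(\tfrac T2,T],\end{cases}$$ where $$\boldsymbol{x}_p(0)=\left(I-\mathrm{e}^{\frac{T}{2}A_2}\mathrm{e}^{\frac{T}{2}A_1}\right)^{-1}\mathrm{e}^{\frac{T}{2}A_2}A_1^{-1}\left(\mathrm{e}^{\frac{T}{2}A_1}-I\right)\boldsymbol{b}_1 .$$ The periodic solution is globally asymptotically stable: for every initial value $\boldsymbol{x}(0)=\boldsymbol{x}_0\in\mathbb{R}^2$, the continuous solution $\boldsymbol{x}$ satisfies $\boldsymbol{x}(t)-\boldsymbol{x}_p(t)\to 0$ as $t\to\infty$.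
   Context: Let $R,L,C,V_{dc},T>0$ be parameters. Let $\boldsymbol{x}(t)=[i(t),v(t)]^{\intercal}$ (inductor current $i$, capacitor voltage $v$). Define $$A_1=\begin{bmatrix}-\frac RL & -\frac1L\\ \frac1C & 0\end{bmatrix},\quad A_2=\begin{bmatrix}-\frac RL & \frac1L\\ -\frac1C & 0\end{bmatrix},\quad \boldsymbol{b}_1=\begin{bmatrix}\frac{V_{dc}}L\\ 0\end{bmatrix}.$$ The switched system on $t\ge 0$ is: $\boldsymbol{x}'=A_1\boldsymbol{x}+\boldsymbol{b}_1$ on each interval $[(k-1)T,(k-1)T+\frac T2]$ and $\boldsymbol{x}'=A_2\boldsymbol{x}$ on each interval $[(k-1)T+\frac T2,kT]$, $k=1,2,3,\dots$; i.e. the first system is used when $t \bmod T<T/2$ and the second otherwise. A solution is a continuous function $\boldsymbol{x}:[0,\infty)\to\mathbb{R}^2$ satisfying these equations on each interval. $\mathrm{e}^{tA}$ denotes the matrix exponential. *)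

From Stdlib Require Import Reals Lra Arith ClassicalEpsilon.
Open Scope R_scope.

Record Mat2 := mkM { m11 : R; m12 : R; m21 : R; m22 : R }.
Record Vec2 := mkV { v1 : R; v2 : R }.

Definition mI : Mat2 := mkM 1 0 0 1.
Definition mZ : Mat2 := mkM 0 0 0 0.
Definition madd (A B : Mat2) : Mat2 :=
  mkM (m11 A + m11 B) (m12 A + m12 B) (m21 A + m21 B) (m22 A + m22 B).
Definition msub (A B : Mat2) : Mat2 :=
  mkM (m11 A - m11 B) (m12 A - m12 B) (m21 A - m21 B) (m22 A - m22 B).
Definition mscale (c : R) (A : Mat2) : Mat2 :=
  mkM (c * m11 A) (c * m12 A) (c * m21 A) (c * m22 A).
Definition mmul (A B : Mat2) : Mat2 :=
  mkM (m11 A * m11 B + m12 A * m21 B) (m11 A * m12 B + m12 A * m22 B)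
      (m21 A * m11 B + m22 A * m21 B) (m21 A * m12 B + m22 A * m22 B).
Definition mvmul (A : Mat2) (x : Vec2) : Vec2 :=
  mkV (m11 A * v1 x + m12 A * v2 x) (m21 A * v1 x + m22 A * v2 x).
Definition vadd (x y : Vec2) : Vec2 := mkV (v1 x + v1 y) (v2 x + v2 y).
Definition vsub (x y : Vec2) : Vec2 := mkV (v1 x - v1 y) (v2 x - v2 y).
Definition vnorm (x : Vec2) : R := sqrt (v1 x ^ 2 + v2 x ^ 2).

Definition mdet (A : Mat2) : R := m11 A * m22 A - m12 A * m21 A.
Definition minvertible (A : Mat2) : Prop :=
  exists B : Mat2, mmul A B = mI /\ mmul B A = mI.
(* The inverse of a 2x2 matrix (adjugate / determinant); it is the genuine
   inverse whenever the matrix is invertible. *)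
Definition minv (A : Mat2) : Mat2 :=
  mscale (/ mdet A) (mkM (m22 A) (- m12 A) (- m21 A) (m11 A)).

Fixpoint mpow (A : Mat2) (k : nat) : Mat2 :=
  match k with O => mI | S k' => mmul A (mpow A k') end.

Fixpoint mexp_partial (A : Mat2) (n : nat) : Mat2 :=
  match n with
  | O => mI
  | S n' => madd (mexp_partial A n') (mscale (/ INR (Factorial.fact (S n'))) (mpow A (S n')))
  end.

Definition is_mexp (A E : Mat2) : Prop :=
  Un_cv (fun n => m11 (mexp_partial A n)) (m11 E) /\
  Un_cv (fun n => m12 (mexp_partial A n)) (m12 E) /\
  Un_cv (fun n => m21 (mexp_partial A n)) (m21 E) /\
  Un_cv (fun n => m22 (mexp_partial A n)) (m22 E).

Definition mexp (A : Mat2) : Mat2 :=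
  epsilon (inhabits mZ) (fun E => is_mexp A E).

Definition mexpt (t : R) (A : Mat2) : Mat2 := mexp (mscale t A).

Definition Amat1 (Rr L C : R) : Mat2 := mkM (- Rr / L) (- / L) (/ C) 0.
Definition Amat2 (Rr L C : R) : Mat2 := mkM (- Rr / L) (/ L) (- / C) 0.
Definition b1 (L Vdc : R) : Vec2 := mkV (Vdc / L) 0.

(* derivative of f at t, within the closed interval [a,b]
   (one-sided at the endpoints) *)
Definition deriv_within (a b : R) (f : R -> R) (t l : R) : Prop :=
  limit1_in (fun s => (f s - f t) / (s - t))
            (fun s => a <= s <= b /\ s <> t) l t.

Definition solves_on (a b : R) (A : Mat2) (c : Vec2) (x : R -> Vec2) : Prop :=
  forall t, a <= t <= b ->
    deriv_within a b (fun s => v1 (x s)) t (v1 (vadd (mvmul A (x t)) c)) /\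
    deriv_within a b (fun s => v2 (x s)) t (v2 (vadd (mvmul A (x t)) c)).

Definition vzero : Vec2 := mkV 0 0.

Definition is_solution (Rr L C Vdc T : R) (x : R -> Vec2) : Prop :=
  (forall t, 0 <= t ->
     limit1_in (fun s => v1 (x s)) (fun s => 0 <= s) (v1 (x t)) t /\
     limit1_in (fun s => v2 (x s)) (fun s => 0 <= s) (v2 (x t)) t) /\
  (forall k : nat, (1 <= k)%nat ->
     solves_on (INR (k - 1) * T) (INR (k - 1) * T + T / 2)
               (Amat1 Rr L C) (b1 L Vdc) x /\
     solves_on (INR (k - 1) * T + T / 2) (INR k * T)
               (Amat2 Rr L C) vzero x).

Definition T_periodic (T : R) (x : R -> Vec2) : Prop :=
  forall t, 0 <= t -> x (t + T) = x t.

(* The stored energy V(i, v) = L i^2 + C v^2 satisfies dV/dt = -2 R i^2 along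
   both linear parts x' = A1 x and x' = A2 x, hence along the difference of any
   two solutions of the switched system.  This yields uniqueness on every half
   period and shows that both flows are non-expansive for V; moreover, as the
   (1,2) entry of A1 is nonzero, i cannot vanish identically on a nonzero orbit
   of A1, so e^{(T/2)A1} strictly decreases V off the origin.  Hence the
   monodromy matrix P = e^{(T/2)A2} e^{(T/2)A1} contracts V by a factor rho < 1
   (a positive definite quadratic form is bounded below by a multiple of the
   Euclidean one).  So I - P is invertible, the period map z |-> P z + w has the
   unique fixed point (I - P)^{-1} w, the solution starting there is the unique
   periodic one, and any two solutions approach each other like rho^k. *)

From Stdlib Require Import Reals Lra Psatz ZArith Lia ClassicalEpsilon.
From Coquelicot Require Import Coquelicot.
Open Scope R_scope.

Lemma Mat2_ext (A B : Mat2) :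
  m11 A = m11 B -> m12 A = m12 B -> m21 A = m21 B -> m22 A = m22 B -> A = B.
Proof. destruct A, B; simpl; intros; subst; reflexivity. Qed.

Lemma Vec2_ext (x y : Vec2) : v1 x = v1 y -> v2 x = v2 y -> x = y.
Proof. destruct x, y; simpl; intros; subst; reflexivity. Qed.

Lemma mvmul_mmul (P Q : Mat2) (x : Vec2) : mvmul (mmul P Q) x = mvmul P (mvmul Q x).
Proof. apply Vec2_ext; simpl; ring. Qed.

Lemma mvmul_mI (x : Vec2) : mvmul mI x = x.
Proof. apply Vec2_ext; simpl; ring. Qed.

Lemma mvmul_vadd (P : Mat2) (x y : Vec2) : mvmul P (vadd x y) = vadd (mvmul P x) (mvmul P y).
Proof. apply Vec2_ext; simpl; ring. Qed.

Lemma mvmul_msub (P Q : Mat2) (x : Vec2) : mvmul (msub P Q) x = vsub (mvmul P x) (mvmul Q x).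
Proof. apply Vec2_ext; simpl; ring. Qed.

Lemma mdet_neq0 (M : Mat2) : (forall z, mvmul M z = vzero -> z = vzero) -> mdet M <> 0.
Proof.
  destruct M as [a b c d]; unfold mdet; simpl; intros Hinj Hdet.
  assert (K1 : mkV d (- c) = vzero) by (apply Hinj, Vec2_ext; simpl; lra).
  assert (K2 : mkV b (- a) = vzero) by (apply Hinj, Vec2_ext; simpl; lra).
  injection K1; injection K2; intros.
  assert (K3 : mkV 1 0 = vzero) by (apply Hinj, Vec2_ext; simpl; lra).
  injection K3; lra.
Qed.

Lemma minv_inverse (M : Mat2) : mdet M <> 0 -> mmul M (minv M) = mI /\ mmul (minv M) M = mI.
Proof.
  destruct M as [a b c d]; unfold minv, mdet; simpl; intro Hdet.
  split; apply Mat2_ext; simpl; field; exact Hdet.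
Qed.

Definition mbounded (P : Mat2) (M : R) : Prop :=
  Rabs (m11 P) <= M /\ Rabs (m12 P) <= M /\ Rabs (m21 P) <= M /\ Rabs (m22 P) <= M.

Definition mabs_sum (A : Mat2) : R :=
  Rabs (m11 A) + Rabs (m12 A) + Rabs (m21 A) + Rabs (m22 A).

Lemma mabs_sum_ge0 (A : Mat2) : 0 <= mabs_sum A.
Proof.
  unfold mabs_sum. pose proof (Rabs_pos (m11 A)); pose proof (Rabs_pos (m12 A));
  pose proof (Rabs_pos (m21 A)); pose proof (Rabs_pos (m22 A)); lra.
Qed.

Lemma Rabs_lincomb_le (a b x y M : R) :
  Rabs x <= M -> Rabs y <= M -> Rabs (a * x + b * y) <= (Rabs a + Rabs b) * M.
Proof.
  intros Hx Hy. eapply Rle_trans; [apply Rabs_triang|]. rewrite !Rabs_mult.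
  pose proof (Rabs_pos a); pose proof (Rabs_pos b).
  pose proof (Rmult_le_compat_l _ _ _ (Rabs_pos a) Hx).
  pose proof (Rmult_le_compat_l _ _ _ (Rabs_pos b) Hy). lra.
Qed.

Lemma mpow_bounded (A : Mat2) (k : nat) : mbounded (mpow A k) (mabs_sum A ^ k).
Proof.
  pose proof (mabs_sum_ge0 A) as Hs.
  induction k as [|k [H1 [H2 [H3 H4]]]]; simpl.
  - unfold mbounded; simpl; rewrite Rabs_R1, Rabs_R0; lra.
  - assert (0 <= mabs_sum A ^ k) by (apply pow_le; lra).
    pose proof (Rabs_pos (m11 A)); pose proof (Rabs_pos (m12 A));
    pose proof (Rabs_pos (m21 A)); pose proof (Rabs_pos (m22 A)).
    unfold mbounded, mabs_sum in *; simpl;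
    repeat split; (eapply Rle_trans; [apply Rabs_lincomb_le; eassumption|]); nra.
Qed.

(* Abstracts the four entry maps [m11] ... [m22], so that the power-series
   arguments about the entries of [mexpt t A] are made once. *)
Definition bounded_linear_entry (f : Mat2 -> R) : Prop :=
  (forall P M, mbounded P M -> Rabs (f P) <= M) /\
  (forall P Q, f (madd P Q) = f P + f Q) /\ (forall c P, f (mscale c P) = c * f P).

Lemma entry_m11 : bounded_linear_entry m11.
Proof. repeat split; intros; try reflexivity; apply H. Qed.
Lemma entry_m12 : bounded_linear_entry m12.
Proof. repeat split; intros; try reflexivity; apply H. Qed.
Lemma entry_m21 : bounded_linear_entry m21.
Proof. repeat split; intros; try reflexivity; apply H. Qed.
Lemma entry_m22 : bounded_linear_entry m22.
Proof. repeat split; intros; try reflexivity; apply H. Qed.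

Definition exp_coef (f : Mat2 -> R) (A : Mat2) (k : nat) : R :=
  f (mpow A k) / INR (Factorial.fact k).

Lemma exp_partial_sums_cv (y : R) :
  Un_cv (fun n => sum_f_R0 (fun k => y ^ k / INR (Factorial.fact k)) n) (exp y).
Proof.
  pose proof (is_exp_Reals y) as H. apply is_series_Reals in H.
  intros eps Heps. destruct (H eps Heps) as [N HN]. exists N. intros n Hn.
  erewrite sum_eq; [exact (HN n Hn)|]. intros i _. rewrite pow_n_pow. reflexivity.
Qed.

Lemma CV_radius_exp_coef (f : Mat2 -> R) (A : Mat2) (x : R) :
  bounded_linear_entry f -> Rbar_lt (Rabs x) (CV_radius (exp_coef f A)).
Proof.
  intros [Hb _].
  assert (Hr : 0 < Rabs x + 1) by (pose proof (Rabs_pos x); lra).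
  pose proof (mabs_sum_ge0 A) as Hs.
  assert (X : CVN_r (fun n y => exp_coef f A n * y ^ n) (mkposreal _ Hr)).
  { exists (fun k => (mabs_sum A * (Rabs x + 1)) ^ k / INR (Factorial.fact k)).
    exists (exp (mabs_sum A * (Rabs x + 1))). split.
    - intros eps Heps. destruct (exp_partial_sums_cv (mabs_sum A * (Rabs x + 1)) eps Heps)
        as [N HN].
      exists N. intros n Hn. erewrite sum_eq; [exact (HN n Hn)|]. intros i _.
      rewrite Rabs_right; [reflexivity|]. apply Rle_ge, Rmult_le_pos.
      + apply pow_le; nra.
      + left; apply Rinv_0_lt_compat, INR_fact_lt_0.
    - intros n y Hy. unfold Boule in Hy. rewrite Rminus_0_r in Hy. simpl in Hy.
      unfold exp_coef, Rdiv. rewrite !Rabs_mult, <- RPow_abs, Rpow_mult_distr.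
      rewrite (Rabs_right (/ _)) by (left; apply Rinv_0_lt_compat, INR_fact_lt_0).
      assert (Hi : 0 < / INR (Factorial.fact n)) by apply Rinv_0_lt_compat, INR_fact_lt_0.
      assert (Hp : Rabs y ^ n <= (Rabs x + 1) ^ n) by (apply pow_incr; split; [apply Rabs_pos|lra]).
      assert (Rabs (f (mpow A n)) * Rabs y ^ n <= mabs_sum A ^ n * (Rabs x + 1) ^ n).
      { apply Rmult_le_compat; auto using Rabs_pos, pow_le, Rabs_pos, mpow_bounded. }
      nra. }
  eapply Rbar_lt_le_trans; [|exact (CV_radius_Reals_1 _ _ X)]. simpl. lra.
Qed.

Lemma mpow_mscale (t : R) (A : Mat2) (k : nat) : mpow (mscale t A) k = mscale (t ^ k) (mpow A k).
Proof. induction k; simpl; [|rewrite IHk]; apply Mat2_ext; simpl; ring. Qed.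

Lemma mexp_partial_mscale_entry (f : Mat2 -> R) (t : R) (A : Mat2) (n : nat) :
  bounded_linear_entry f ->
  f (mexp_partial (mscale t A) n) = sum_f_R0 (fun k => exp_coef f A k * t ^ k) n.
Proof.
  intros [_ [Hadd Hscal]]. induction n; cbn [mexp_partial sum_f_R0].
  - unfold exp_coef; simpl. field.
  - rewrite Hadd, Hscal, IHn, mpow_mscale, Hscal. unfold exp_coef.
    field. apply INR_fact_neq_0.
Qed.

Lemma mexp_partial_mscale_entry_cv (f : Mat2 -> R) (t : R) (A : Mat2) :
  bounded_linear_entry f ->
  Un_cv (fun n => f (mexp_partial (mscale t A) n)) (PSeries (exp_coef f A) t).
Proof.
  intros Hf.
  pose proof (PSeries_correct _ _ (CV_radius_inside _ _ (CV_radius_exp_coef f A t Hf))) as H.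
  apply is_series_Reals in H. intros eps Heps. destruct (H eps Heps) as [N HN].
  exists N. intros n Hn. rewrite mexp_partial_mscale_entry by exact Hf.
  erewrite sum_eq; [exact (HN n Hn)|]. intros i _. rewrite pow_n_pow.
  apply Rmult_comm.
Qed.

Lemma mexpt_PSeries (t : R) (A : Mat2) :
  mexpt t A = mkM (PSeries (exp_coef m11 A) t) (PSeries (exp_coef m12 A) t)
                  (PSeries (exp_coef m21 A) t) (PSeries (exp_coef m22 A) t).
Proof.
  pose proof (mexp_partial_mscale_entry_cv m11 t A entry_m11) as C11.
  pose proof (mexp_partial_mscale_entry_cv m12 t A entry_m12) as C12.
  pose proof (mexp_partial_mscale_entry_cv m21 t A entry_m21) as C21.
  pose proof (mexp_partial_mscale_entry_cv m22 t A entry_m22) as C22.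
  assert (Hex : exists E, is_mexp (mscale t A) E)
    by (eexists (mkM _ _ _ _); repeat split; eassumption).
  destruct (epsilon_spec (inhabits mZ) _ Hex) as [H11 [H12 [H21 H22]]].
  unfold mexpt, mexp. apply Mat2_ext; simpl; eapply UL_sequence; eassumption.
Qed.

Lemma mexpt_0 (A : Mat2) : mexpt 0 A = mI.
Proof.
  rewrite mexpt_PSeries, !PSeries_0. unfold exp_coef. apply Mat2_ext; simpl; field.
Qed.

Lemma is_derive_PSeries_exp_coef (f g h : Mat2 -> R) (A : Mat2) (a b t : R) :
  bounded_linear_entry f -> bounded_linear_entry g -> bounded_linear_entry h ->
  (forall P, f (mmul A P) = a * g P + b * h P) ->
  is_derive (PSeries (exp_coef f A)) t
    (a * PSeries (exp_coef g A) t + b * PSeries (exp_coef h A) t).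
Proof.
  intros Hf Hg Hh HA.
  assert (Hex : forall e, bounded_linear_entry e -> ex_pseries (exp_coef e A) t)
    by (intros; apply CV_radius_inside, CV_radius_exp_coef; assumption).
  replace (a * PSeries (exp_coef g A) t + b * PSeries (exp_coef h A) t)
    with (PSeries (PS_derive (exp_coef f A)) t).
  - apply is_derive_PSeries, CV_radius_exp_coef, Hf.
  - rewrite (PSeries_ext _ (PS_plus (PS_scal a (exp_coef g A)) (PS_scal b (exp_coef h A)))).
    + rewrite PSeries_plus, !PSeries_scal; [reflexivity|apply ex_pseries_scal..];
        auto using Rmult_comm.
    + intros n. unfold PS_derive, PS_plus, PS_scal, exp_coef.
      change (mpow A (S n)) with (mmul A (mpow A n)).
      rewrite HA, fact_simpl, mult_INR, S_INR.
      change (plus ?x ?y) with (x + y); change (scal ?x ?y) with (x * y).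
      field. split; [apply INR_fact_neq_0|pose proof (pos_INR n); lra].
Qed.

Definition vec_derive (x : R -> Vec2) (t : R) (dx : Vec2) : Prop :=
  derivable_pt_lim (fun s => v1 (x s)) t (v1 dx) /\
  derivable_pt_lim (fun s => v2 (x s)) t (v2 dx).

Definition mat_derive (E : R -> Mat2) (t : R) (D : Mat2) : Prop :=
  derivable_pt_lim (fun s => m11 (E s)) t (m11 D) /\
  derivable_pt_lim (fun s => m12 (E s)) t (m12 D) /\
  derivable_pt_lim (fun s => m21 (E s)) t (m21 D) /\
  derivable_pt_lim (fun s => m22 (E s)) t (m22 D).

Lemma mexpt_derive (A : Mat2) (t : R) :
  mat_derive (fun s => mexpt s A) t (mmul A (mexpt t A)).
Proof.
  rewrite (mexpt_PSeries t A).
  repeat split; apply is_derive_Reals;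
    (eapply is_derive_ext; [intro s; rewrite (mexpt_PSeries s A); reflexivity|]);
    apply is_derive_PSeries_exp_coef;
    auto using entry_m11, entry_m12, entry_m21, entry_m22.
Qed.

Lemma derivable_pt_lim_shift (f : R -> R) (c t l : R) :
  derivable_pt_lim f (t - c) l -> derivable_pt_lim (fun s => f (s - c)) t l.
Proof.
  intros H eps Heps. destruct (H eps Heps) as [d Hd]. exists d. intros h Hh0 Hh.
  replace (t + h - c) with (t - c + h) by ring. exact (Hd h Hh0 Hh).
Qed.

Lemma derivable_pt_lim_lincomb (f g : R -> R) (a b t l m : R) :
  derivable_pt_lim f t l -> derivable_pt_lim g t m ->
  derivable_pt_lim (fun s => a * f s + b * g s) t (a * l + b * m).
Proof.
  intros Hf Hg.
  exact (derivable_pt_lim_plus _ _ _ _ _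
           (derivable_pt_lim_scal _ a _ _ Hf) (derivable_pt_lim_scal _ b _ _ Hg)).
Qed.

Lemma mat_derive_shift (E : R -> Mat2) (D : Mat2) (c t : R) :
  mat_derive E (t - c) D -> mat_derive (fun s => E (s - c)) t D.
Proof.
  intros (H11 & H12 & H21 & H22).
  exact (conj (derivable_pt_lim_shift (fun u => m11 (E u)) _ _ _ H11)
         (conj (derivable_pt_lim_shift (fun u => m12 (E u)) _ _ _ H12)
         (conj (derivable_pt_lim_shift (fun u => m21 (E u)) _ _ _ H21)
               (derivable_pt_lim_shift (fun u => m22 (E u)) _ _ _ H22)))).
Qed.

Lemma mat_derive_msub_r (E : R -> Mat2) (D P : Mat2) (t : R) :
  mat_derive E t D -> mat_derive (fun s => msub (E s) P) t D.
Proof.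
  intros (H11 & H12 & H21 & H22); refine (conj _ (conj _ (conj _ _))); simpl;
    rewrite <- Rminus_0_r;
    (apply derivable_pt_lim_minus; [assumption|apply derivable_pt_lim_const]).
Qed.

Lemma vec_derive_mvmul_r (E : R -> Mat2) (D : Mat2) (w : Vec2) (t : R) :
  mat_derive E t D -> vec_derive (fun s => mvmul (E s) w) t (mvmul D w).
Proof.
  intros (H11 & H12 & H21 & H22); split; simpl.
  - pose proof (derivable_pt_lim_lincomb _ _ (v1 w) (v2 w) _ _ _ H11 H12) as H.
    rewrite Rmult_comm, (Rmult_comm (m12 D)).
    eapply derivable_pt_lim_ext; [|exact H]. intro s; simpl. ring.
  - pose proof (derivable_pt_lim_lincomb _ _ (v1 w) (v2 w) _ _ _ H21 H22) as H.
    rewrite Rmult_comm, (Rmult_comm (m22 D)).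
    eapply derivable_pt_lim_ext; [|exact H]. intro s; simpl. ring.
Qed.

Lemma vec_derive_mvmul_l (P : Mat2) (x : R -> Vec2) (dx : Vec2) (t : R) :
  vec_derive x t dx -> vec_derive (fun s => mvmul P (x s)) t (mvmul P dx).
Proof. intros [H1 H2]; split; apply derivable_pt_lim_lincomb; assumption. Qed.

Lemma vec_derive_vadd (x y : R -> Vec2) (dx dy : Vec2) (t : R) :
  vec_derive x t dx -> vec_derive y t dy -> vec_derive (fun s => vadd (x s) (y s)) t (vadd dx dy).
Proof. intros [X1 X2] [Y1 Y2]; split; apply derivable_pt_lim_plus; assumption. Qed.

Lemma flow_derive (A : Mat2) (w : Vec2) (c t : R) :
  vec_derive (fun s => mvmul (mexpt (s - c) A) w) t (mvmul A (mvmul (mexpt (t - c) A) w)).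
Proof.
  rewrite <- mvmul_mmul.
  apply vec_derive_mvmul_r, (mat_derive_shift (fun u => mexpt u A)), mexpt_derive.
Qed.

(* With [Ai] the inverse of [A], this is the solution of [x' = A x + b], [x 0 = z]. *)
Definition affine_flow (A Ai : Mat2) (b z : Vec2) (u : R) : Vec2 :=
  vadd (mvmul (mexpt u A) z) (mvmul Ai (mvmul (msub (mexpt u A) mI) b)).

Lemma affine_flow_0 (A Ai : Mat2) (b z : Vec2) : affine_flow A Ai b z 0 = z.
Proof. unfold affine_flow. rewrite mexpt_0. apply Vec2_ext; simpl; ring. Qed.

Lemma affine_flow_derive (A Ai : Mat2) (b z : Vec2) (c t : R) :
  mmul A Ai = mI -> mmul Ai A = mI ->
  vec_derive (fun s => affine_flow A Ai b z (s - c)) t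
             (vadd (mvmul A (affine_flow A Ai b z (t - c))) b).
Proof.
  intros HAAi HAiA.
  pose proof (mat_derive_shift (fun u => mexpt u A) _ c t (mexpt_derive A (t - c))) as HE.
  pose proof (vec_derive_vadd _ _ _ _ t (vec_derive_mvmul_r _ _ z t HE)
    (vec_derive_mvmul_l Ai _ _ t (vec_derive_mvmul_r _ _ b t (mat_derive_msub_r _ _ mI t HE))))
    as H.
  replace (vadd (mvmul A (affine_flow A Ai b z (t - c))) b) with
    (vadd (mvmul (mmul A (mexpt (t - c) A)) z) (mvmul Ai (mvmul (mmul A (mexpt (t - c) A)) b)));
    [exact H|].
  unfold affine_flow.
  rewrite mvmul_vadd, !mvmul_mmul, <- (mvmul_mmul Ai A), HAiA, mvmul_mI.
  rewrite <- (mvmul_mmul A Ai), HAAi, mvmul_mI. apply Vec2_ext; simpl; ring.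
Qed.

Lemma deriv_within_of_derivable (a b : R) (f : R -> R) (t l : R) :
  derivable_pt_lim f t l -> deriv_within a b f t l.
Proof.
  intros H eps Heps. destruct (H eps Heps) as [d Hd].
  exists d. split; [apply cond_pos|]. intros s [[_ Hst] Hsd]. simpl in *. unfold Rdist in *.
  specialize (Hd (s - t) ltac:(lra) Hsd). replace (t + (s - t)) with s in Hd by ring. exact Hd.
Qed.

Lemma deriv_within_interior (a b : R) (f : R -> R) (t l : R) :
  deriv_within a b f t l -> a < t < b -> derivable_pt_lim f t l.
Proof.
  intros H Ht eps Heps. destruct (H eps Heps) as [d [Hd Hq]].
  assert (Hm : 0 < Rmin d (Rmin (t - a) (b - t))) by (repeat apply Rmin_glb_lt; lra).
  exists (mkposreal _ Hm). intros h Hh0 Hh. simpl in Hh.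
  pose proof (Rmin_l d (Rmin (t - a) (b - t))); pose proof (Rmin_r d (Rmin (t - a) (b - t))).
  pose proof (Rmin_l (t - a) (b - t)); pose proof (Rmin_r (t - a) (b - t)).
  apply Rabs_def2 in Hh.
  specialize (Hq (t + h)). simpl in Hq. unfold Rdist in Hq.
  replace (t + h - t) with h in Hq by ring. apply Hq. split; [split; lra|].
  apply Rabs_def1; lra.
Qed.

Lemma deriv_within_continuous (a b : R) (f : R -> R) (t l : R) :
  deriv_within a b f t l -> limit1_in f (fun s => a <= s <= b) (f t) t.
Proof.
  intros H.
  assert (H0 : limit1_in (fun s => f t + (f s - f t) / (s - t) * (s - t))
                 (fun s => a <= s <= b /\ s <> t) (f t + l * 0) t).
  { apply limit_plus; [apply (limit_free (fun _ => f t) _ t)|apply limit_mul; [exact H|]].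
    replace 0 with (t - t) by ring.
    apply limit_minus; [apply lim_x|apply (limit_free (fun _ => t) _ t)]. }
  rewrite Rmult_0_r, Rplus_0_r in H0.
  intros eps Heps. destruct (H0 eps Heps) as [d [Hd Hq]]. exists d. split; [exact Hd|].
  intros s [Hs Hsd]. destruct (Req_dec s t) as [->|Hne].
  - simpl. unfold Rdist. rewrite Rminus_diag, Rabs_R0. exact Heps.
  - specialize (Hq s (conj (conj Hs Hne) Hsd)). simpl in *.
    replace (f t + (f s - f t) / (s - t) * (s - t)) with (f s) in Hq by (field; lra). exact Hq.
Qed.

Lemma deriv_within_ext (a b : R) (f g : R -> R) (t l : R) :
  (forall s, a <= s <= b -> f s = g s) -> a <= t <= b ->
  deriv_within a b f t l -> deriv_within a b g t l.
Proof.
  intros He Ht H. apply (limit1_ext (fun s => (f s - f t) / (s - t))); [|exact H].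
  intros s [Hs _]. rewrite (He s Hs), (He t Ht). reflexivity.
Qed.

Lemma deriv_within_minus (a b : R) (f g : R -> R) (t l m : R) :
  deriv_within a b f t l -> deriv_within a b g t m ->
  deriv_within a b (fun s => f s - g s) t (l - m).
Proof.
  intros Hf Hg. eapply limit1_ext; [|exact (limit_minus _ _ _ _ _ _ Hf Hg)].
  intros s [_ Hne]. field. lra.
Qed.

Lemma solves_on_of_vec_derive (a b : R) (A : Mat2) (c : Vec2) (x : R -> Vec2) :
  (forall t, a <= t <= b -> vec_derive x t (vadd (mvmul A (x t)) c)) -> solves_on a b A c x.
Proof.
  intros H t Ht. destruct (H t Ht). split; apply deriv_within_of_derivable; assumption.
Qed.

Lemma solves_on_ext (a b : R) (A : Mat2) (c : Vec2) (x y : R -> Vec2) :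
  (forall s, a <= s <= b -> x s = y s) -> solves_on a b A c y -> solves_on a b A c x.
Proof.
  intros He Hy t Ht. destruct (Hy t Ht) as [D1 D2]. rewrite (He t Ht).
  split; (eapply deriv_within_ext; [|exact Ht|eassumption]);
    intros s Hs; rewrite (He s Hs); reflexivity.
Qed.

Lemma solves_on_vsub (a b : R) (A : Mat2) (c : Vec2) (x y : R -> Vec2) :
  solves_on a b A c x -> solves_on a b A c y ->
  solves_on a b A vzero (fun t => vsub (x t) (y t)).
Proof.
  intros Hx Hy t Ht. destruct (Hx t Ht) as [X1 X2], (Hy t Ht) as [Y1 Y2].
  pose proof (deriv_within_minus _ _ _ _ _ _ _ X1 Y1) as D1.
  pose proof (deriv_within_minus _ _ _ _ _ _ _ X2 Y2) as D2.
  simpl in *. split.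
  - replace (m11 A * (v1 (x t) - v1 (y t)) + m12 A * (v2 (x t) - v2 (y t)) + 0) with
      (m11 A * v1 (x t) + m12 A * v2 (x t) + v1 c - (m11 A * v1 (y t) + m12 A * v2 (y t) + v1 c))
      by ring. exact D1.
  - replace (m21 A * (v1 (x t) - v1 (y t)) + m22 A * (v2 (x t) - v2 (y t)) + 0) with
      (m21 A * v1 (x t) + m22 A * v2 (x t) + v2 c - (m21 A * v1 (y t) + m22 A * v2 (y t) + v2 c))
      by ring. exact D2.
Qed.

Lemma nonincreasing_open (f df : R -> R) (a b : R) :
  (forall t, a < t < b -> derivable_pt_lim f t (df t)) -> (forall t, a < t < b -> df t <= 0) ->
  forall s t, a < s -> s < t -> t < b -> f t <= f s.
Proof.
  intros Hd Hneg s t Has Hst Htb.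
  destruct (MVT_gen f s t df) as [c [Hc Hfc]];
    rewrite Rmin_left, Rmax_right in * by lra.
  - intros x Hx. apply is_derive_Reals, Hd. lra.
  - intros x Hx. apply derivable_continuous_pt. exists (df x). apply Hd. lra.
  - assert (df c <= 0) by (apply Hneg; lra). nra.
Qed.

Lemma nonincreasing_closed (f df : R -> R) (a b : R) :
  (forall t, a <= t <= b -> limit1_in f (fun s => a <= s <= b) (f t) t) ->
  (forall t, a < t < b -> derivable_pt_lim f t (df t)) -> (forall t, a < t < b -> df t <= 0) ->
  forall s t, a <= s -> s <= t -> t <= b -> f t <= f s.
Proof.
  intros Hc Hd Hneg s t Has Hst Htb.
  (* Compare on [s + d, t - d] by the interior case, with [d] so small that
     continuity at [s] and at [t] costs less than a third of [f t - f s] each. *)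
  destruct (Req_dec s t) as [->|Hne]; [lra|].
  destruct (Rle_or_lt (f t) (f s)) as [|Hlt]; [assumption|exfalso].
  set (eps := (f t - f s) / 3).
  assert (Heps : eps > 0) by (unfold eps; lra).
  destruct (Hc s ltac:(lra) eps Heps) as [d1 [Hd1 Hq1]].
  destruct (Hc t ltac:(lra) eps Heps) as [d2 [Hd2 Hq2]].
  set (d := Rmin (Rmin (d1 / 2) (d2 / 2)) ((t - s) / 3)).
  assert (Hdpos : 0 < d /\ d < d1 /\ d < d2 /\ d <= (t - s) / 3).
  { pose proof (Rmin_l (Rmin (d1 / 2) (d2 / 2)) ((t - s) / 3)) as M1.
    pose proof (Rmin_r (Rmin (d1 / 2) (d2 / 2)) ((t - s) / 3)) as M2.
    pose proof (Rmin_l (d1 / 2) (d2 / 2)); pose proof (Rmin_r (d1 / 2) (d2 / 2)).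
    assert (0 < d) by (unfold d; repeat apply Rmin_glb_lt; lra). fold d in M1, M2. lra. }
  assert (A1 : Rabs (f (s + d) - f s) < eps).
  { apply Hq1. split; [lra|]. simpl; unfold Rdist. rewrite Rabs_right; lra. }
  assert (A2 : Rabs (f (t - d) - f t) < eps).
  { apply Hq2. split; [lra|]. simpl; unfold Rdist. rewrite Rabs_left; lra. }
  assert (A3 : f (t - d) <= f (s + d)) by (apply (nonincreasing_open f df a b Hd Hneg); lra).
  apply Rabs_def2 in A1. apply Rabs_def2 in A2. unfold eps in *. lra.
Qed.

Lemma derivable_pt_lim_locally_const (f : R -> R) (a b c t l : R) :
  a < t < b -> (forall s, a < s < b -> f s = c) -> derivable_pt_lim f t l -> l = 0.
Proof.
  intros Ht Hc Hf. apply (uniqueness_limite f t); [exact Hf|].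
  apply (derivable_pt_lim_locally_ext (fun _ => c) f t a b 0 Ht); [intros; symmetry; auto|].
  apply derivable_pt_lim_const.
Qed.

Lemma flow_solves_on (a b c : R) (A : Mat2) (w : Vec2) :
  solves_on a b A vzero (fun s => mvmul (mexpt (s - c) A) w).
Proof.
  apply solves_on_of_vec_derive. intros t _.
  replace (vadd _ vzero) with (mvmul A (mvmul (mexpt (t - c) A) w))
    by (apply Vec2_ext; simpl; ring).
  apply flow_derive.
Qed.

Lemma affine_flow_solves_on (a b c : R) (A Ai : Mat2) (bb z : Vec2) :
  mmul A Ai = mI -> mmul Ai A = mI ->
  solves_on a b A bb (fun s => affine_flow A Ai bb z (s - c)).
Proof.
  intros HAAi HAiA. apply solves_on_of_vec_derive. intros t _. apply affine_flow_derive; assumption.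
Qed.

Definition energy (p q : R) (z : Vec2) : R := p * v1 z ^ 2 + q * v2 z ^ 2.

(* Along [x' = A x], the derivative of [energy p q x] is [- 2 k (v1 x)^2]. *)
Definition dissipative (p q k : R) (A : Mat2) : Prop :=
  forall z, p * v1 z * v1 (mvmul A z) + q * v2 z * v2 (mvmul A z) = - k * v1 z ^ 2.

Lemma energy_derive (p q : R) (x : R -> Vec2) (dx : Vec2) (t : R) :
  vec_derive x t dx ->
  derivable_pt_lim (fun s => energy p q (x s)) t
    (2 * (p * v1 (x t) * v1 dx + q * v2 (x t) * v2 dx)).
Proof.
  intros [H1 H2].
  pose proof (derivable_pt_lim_lincomb _ _ p q t _ _
    (derivable_pt_lim_mult _ _ _ _ _ H1 H1) (derivable_pt_lim_mult _ _ _ _ _ H2 H2)) as H.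
  replace (2 * _) with (p * (v1 dx * v1 (x t) + v1 (x t) * v1 dx) +
                        q * (v2 dx * v2 (x t) + v2 (x t) * v2 dx)) by ring.
  eapply derivable_pt_lim_ext; [|exact H]. intro s. unfold energy, mult_fct. ring.
Qed.

Lemma energy_limit1_in (p q : R) (x : R -> Vec2) (D : R -> Prop) (t : R) :
  limit1_in (fun s => v1 (x s)) D (v1 (x t)) t -> limit1_in (fun s => v2 (x s)) D (v2 (x t)) t ->
  limit1_in (fun s => energy p q (x s)) D (energy p q (x t)) t.
Proof.
  intros H1 H2.
  pose proof (limit_plus _ _ _ _ _ _
    (limit_mul _ _ _ _ _ _ (limit_free (fun _ => p) D t t) (limit_mul _ _ _ _ _ _ H1 H1))
    (limit_mul _ _ _ _ _ _ (limit_free (fun _ => q) D t t) (limit_mul _ _ _ _ _ _ H2 H2))) as H.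
  unfold energy.
  replace (p * v1 (x t) ^ 2 + q * v2 (x t) ^ 2)
    with (p * (v1 (x t) * v1 (x t)) + q * (v2 (x t) * v2 (x t))) by ring.
  eapply limit1_ext; [|exact H]. intros s _. simpl. ring.
Qed.

Lemma pow2_le_0_eq_0 (x : R) : x ^ 2 <= 0 -> x = 0.
Proof. intros Hx. apply Rsqr_0_uniq, Rle_antisym; [unfold Rsqr; nra|apply Rle_0_sqr]. Qed.

Lemma quadratic_form_coercive (al be ga : R) :
  (forall x y, x <> 0 \/ y <> 0 -> 0 < al * x ^ 2 + 2 * be * x * y + ga * y ^ 2) ->
  exists mu, 0 < mu /\ forall x y, mu * (x ^ 2 + y ^ 2) <= al * x ^ 2 + 2 * be * x * y + ga * y ^ 2.
Proof.
  intros Hpos.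
  assert (Hal : 0 < al) by (pose proof (Hpos 1 0 ltac:(left; lra)); lra).
  assert (Hga : 0 < ga) by (pose proof (Hpos 0 1 ltac:(right; lra)); lra).
  assert (Hdisc : 0 < al * ga - be ^ 2).
  { pose proof (Hpos be (- al) ltac:(right; lra)).
    apply (Rmult_lt_reg_l al); nra. }
  exists ((al * ga - be ^ 2) / (al + ga)). split; [apply Rdiv_lt_0_compat; lra|].
  intros x y. apply (Rmult_le_reg_l (al + ga)); [lra|].
  assert (Id : (al + ga) * (al * x ^ 2 + 2 * be * x * y + ga * y ^ 2)
               - (al * ga - be ^ 2) * (x ^ 2 + y ^ 2)
               = (al * x + be * y) ^ 2 + (be * x + ga * y) ^ 2) by ring.
  pose proof (pow2_ge_0 (al * x + be * y)); pose proof (pow2_ge_0 (be * x + ga * y)).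
  replace ((al + ga) * ((al * ga - be ^ 2) / (al + ga) * (x ^ 2 + y ^ 2)))
    with ((al * ga - be ^ 2) * (x ^ 2 + y ^ 2)) by (field; lra).
  lra.
Qed.

Section Energy.

Variables (p q k : R) (A : Mat2).
Hypotheses (Hp : 0 < p) (Hq : 0 < q) (Hk : 0 < k) (HA : dissipative p q k A).

Lemma energy_nonneg (z : Vec2) : 0 <= energy p q z.
Proof. unfold energy. pose proof (pow2_ge_0 (v1 z)); pose proof (pow2_ge_0 (v2 z)). nra. Qed.

Lemma energy_le0 (z : Vec2) : energy p q z <= 0 -> z = vzero.
Proof.
  unfold energy. intros H.
  pose proof (pow2_ge_0 (v1 z)); pose proof (pow2_ge_0 (v2 z)).
  apply Vec2_ext; simpl; apply pow2_le_0_eq_0; nra.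
Qed.

Lemma vnorm_lt_of_energy_lt (z : Vec2) (eps : R) :
  0 < eps -> energy p q z < Rmin p q * eps ^ 2 -> vnorm z < eps.
Proof.
  intros Heps Hz. unfold vnorm, energy in *.
  pose proof (pow2_ge_0 (v1 z)); pose proof (pow2_ge_0 (v2 z)).
  pose proof (Rmin_l p q); pose proof (Rmin_r p q).
  rewrite <- (sqrt_pow2 eps) by lra. apply sqrt_lt_1_alt. split; [lra|].
  assert (0 < Rmin p q) by (apply Rmin_glb_lt; lra). nra.
Qed.

Lemma energy_nonincreasing (a b : R) (z : R -> Vec2) :
  solves_on a b A vzero z ->
  forall s t, a <= s -> s <= t -> t <= b -> energy p q (z t) <= energy p q (z s).
Proof.
  intros Hz.
  apply (nonincreasing_closed _ (fun t => - 2 * k * v1 (z t) ^ 2) a b).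
  - intros t Ht. destruct (Hz t Ht) as [D1 D2].
    apply energy_limit1_in; eapply deriv_within_continuous; eassumption.
  - intros t Ht. destruct (Hz t ltac:(lra)) as [D1 D2].
    pose proof (energy_derive p q z (mvmul A (z t)) t) as H.
    replace (- 2 * k * v1 (z t) ^ 2) with (2 * (- k * v1 (z t) ^ 2)) by ring.
    rewrite <- HA. apply H.
    split; (eapply derivable_pt_lim_ext; [reflexivity|];
            eapply deriv_within_interior; [|exact Ht]);
      [replace (v1 (mvmul A (z t))) with (v1 (vadd (mvmul A (z t)) vzero)) by (simpl; ring)
      |replace (v2 (mvmul A (z t))) with (v2 (vadd (mvmul A (z t)) vzero)) by (simpl; ring)];
      assumption.
  - intros t _. pose proof (pow2_ge_0 (v1 (z t))). nra.
Qed.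

Lemma solves_on_unique (a b : R) (c : Vec2) (x y : R -> Vec2) :
  solves_on a b A c x -> solves_on a b A c y -> x a = y a ->
  forall t, a <= t <= b -> x t = y t.
Proof.
  intros Hx Hy Ha t Ht.
  pose proof (energy_nonincreasing _ _ _ (solves_on_vsub _ _ _ _ _ _ Hx Hy) a t
    ltac:(lra) ltac:(lra) ltac:(lra)) as H.
  cbv beta in H. rewrite Ha in H.
  replace (energy p q (vsub (y a) (y a))) with 0 in H by (unfold energy; simpl; ring).
  apply energy_le0 in H.
  apply Vec2_ext; [apply (f_equal v1) in H|apply (f_equal v2) in H]; simpl in H; lra.
Qed.

Lemma energy_flow_le (w : Vec2) (h : R) : 0 <= h ->
  energy p q (mvmul (mexpt h A) w) <= energy p q w.
Proof.
  intros Hh.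
  pose proof (energy_nonincreasing 0 h _ (flow_solves_on 0 h 0 A w) 0 h
    ltac:(lra) Hh ltac:(lra)) as H.
  cbv beta in H. rewrite !Rminus_0_r, mexpt_0, mvmul_mI in H. exact H.
Qed.

Lemma energy_flow_lt (w : Vec2) (h : R) : m12 A <> 0 -> 0 < h -> w <> vzero ->
  energy p q (mvmul (mexpt h A) w) < energy p q w.
Proof.
  intros H12 Hh Hw.
  set (z := fun s => mvmul (mexpt (s - 0) A) w).
  assert (Hz0 : z 0 = w) by (unfold z; rewrite Rminus_0_r, mexpt_0; apply mvmul_mI).
  replace (mvmul (mexpt h A) w) with (z h) by (unfold z; rewrite Rminus_0_r; reflexivity).
  destruct (Rlt_or_le (energy p q (z h)) (energy p q w)) as [|Hge]; [assumption|exfalso].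
  pose proof (energy_nonincreasing 0 h z (flow_solves_on 0 h 0 A w)) as Hmono.
  assert (Hconst : forall s, 0 < s < h -> energy p q (z s) = energy p q w).
  { intros s Hs. pose proof (Hmono 0 s ltac:(lra) ltac:(lra) ltac:(lra)).
    pose proof (Hmono s h ltac:(lra) ltac:(lra) ltac:(lra)). rewrite Hz0 in *. lra. }
  (* The energy being constant, its derivative [- 2 k (v1 z)^2] vanishes. *)
  assert (Hz1 : forall s, 0 < s < h -> v1 (z s) = 0).
  { intros s Hs.
    pose proof (derivable_pt_lim_locally_const _ 0 h _ s _ Hs Hconst
      (energy_derive p q z _ s (flow_derive A w 0 s))) as E.
    rewrite HA in E. fold (z s) in E. apply pow2_le_0_eq_0. nra. }
  (* Then so does [v1 z' = m11 A v1 z + m12 A v2 z], which forces [v2 z = 0]. *)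
  assert (Hz2 : v2 (z (h / 2)) = 0).
  { pose proof (derivable_pt_lim_locally_const _ 0 h 0 (h / 2) _ ltac:(lra) Hz1
      (proj1 (flow_derive A w 0 (h / 2)))) as E.
    fold (z (h / 2)) in E.
    change (m11 A * v1 (z (h / 2)) + m12 A * v2 (z (h / 2)) = 0) in E.
    rewrite Hz1 in E by lra.
    apply (Rmult_eq_reg_l (m12 A)); [lra|exact H12]. }
  apply Hw, energy_le0. rewrite <- (Hconst (h / 2)) by lra.
  unfold energy. rewrite Hz1, Hz2 by lra. lra.
Qed.

End Energy.

Lemma energy_contraction (p q : R) (P : Mat2) : 0 < p -> 0 < q ->
  (forall z, z <> vzero -> energy p q (mvmul P z) < energy p q z) ->
  exists rho, 0 <= rho < 1 /\ forall z, energy p q (mvmul P z) <= rho * energy p q z.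
Proof.
  intros Hp Hq Hlt.
  destruct (quadratic_form_coercive (p - (p * m11 P ^ 2 + q * m21 P ^ 2))
              (- (p * m11 P * m12 P + q * m21 P * m22 P))
              (q - (p * m12 P ^ 2 + q * m22 P ^ 2))) as [mu [Hmu Hcoer]].
  { intros x y Hxy.
    assert (Hz : mkV x y <> vzero) by (intro E; injection E; lra).
    pose proof (Hlt _ Hz). unfold energy in *. simpl in *. nra. }
  exists (1 - mu / (p + q)).
  assert (Hmain : forall z, energy p q (mvmul P z) <= (1 - mu / (p + q)) * energy p q z).
  { intros [x y]. pose proof (Hcoer x y).
    assert (energy p q (mkV x y) <= (p + q) * (x ^ 2 + y ^ 2))
      by (unfold energy; simpl; pose proof (pow2_ge_0 x); pose proof (pow2_ge_0 y); nra).
    assert (mu / (p + q) * energy p q (mkV x y) <= mu * (x ^ 2 + y ^ 2)).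
    { unfold Rdiv. rewrite Rmult_assoc. apply Rmult_le_compat_l; [lra|].
      apply (Rmult_le_reg_l (p + q)); [lra|]. field_simplify; lra. }
    unfold energy in *; simpl in *. nra. }
  split; [split|exact Hmain].
  - pose proof (Hmain (mkV 1 0)). pose proof (energy_nonneg p q Hp Hq (mvmul P (mkV 1 0))).
    unfold energy at 2 in H. simpl in H. nra.
  - assert (0 < mu / (p + q)) by (apply Rdiv_lt_0_compat; lra). lra.
Qed.

Definition vcontinuous_within (x : R -> Vec2) (D : R -> Prop) (t : R) : Prop :=
  limit1_in (fun s => v1 (x s)) D (v1 (x t)) t /\ limit1_in (fun s => v2 (x s)) D (v2 (x t)) t.

Lemma solves_on_continuous (a b : R) (A : Mat2) (c : Vec2) (x : R -> Vec2) (t : R) :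
  solves_on a b A c x -> a <= t <= b -> vcontinuous_within x (fun s => a <= s <= b) t.
Proof.
  intros Hx Ht. destruct (Hx t Ht) as [D1 D2].
  split; eapply deriv_within_continuous; eassumption.
Qed.

Lemma vcontinuous_within_imp (x : R -> Vec2) (D D' : R -> Prop) (t : R) :
  (forall s, D' s -> D s) -> vcontinuous_within x D t -> vcontinuous_within x D' t.
Proof. intros HD [H1 H2]; split; eapply limit1_imp; eassumption. Qed.

Lemma limit1_in_glue (f : R -> R) (D : R -> Prop) (a c t l : R) :
  a < t < c ->
  limit1_in f (fun s => D s /\ a <= s <= t) l t -> limit1_in f (fun s => t <= s <= c) l t ->
  limit1_in f D l t.
Proof.
  intros Ht H1 H2 eps Heps.
  destruct (H1 eps Heps) as [d1 [Hd1 Q1]], (H2 eps Heps) as [d2 [Hd2 Q2]].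
  set (d := Rmin (Rmin d1 d2) (Rmin (t - a) (c - t))).
  assert (Hd : 0 < d /\ d <= d1 /\ d <= d2 /\ d <= t - a /\ d <= c - t).
  { pose proof (Rmin_l (Rmin d1 d2) (Rmin (t - a) (c - t))) as M1.
    pose proof (Rmin_r (Rmin d1 d2) (Rmin (t - a) (c - t))) as M2.
    pose proof (Rmin_l d1 d2); pose proof (Rmin_r d1 d2).
    pose proof (Rmin_l (t - a) (c - t)); pose proof (Rmin_r (t - a) (c - t)).
    assert (0 < d) by (unfold d; repeat apply Rmin_glb_lt; lra). fold d in M1, M2. lra. }
  exists d. split; [lra|]. intros s [Hs Hsd]. simpl in Hsd; unfold Rdist in Hsd.
  apply Rabs_def2 in Hsd.
  destruct (Rle_or_lt s t).
  - apply Q1. split; [split; [exact Hs|lra]|]. simpl; unfold Rdist; apply Rabs_def1; lra.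
  - apply Q2. split; [lra|]. simpl; unfold Rdist; apply Rabs_def1; lra.
Qed.

Lemma vcontinuous_within_glue (x : R -> Vec2) (D : R -> Prop) (a c t : R) :
  a < t < c ->
  vcontinuous_within x (fun s => D s /\ a <= s <= t) t ->
  vcontinuous_within x (fun s => t <= s <= c) t -> vcontinuous_within x D t.
Proof. intros Ht [L1 L2] [R1 R2]; split; eapply limit1_in_glue; eassumption. Qed.

Definition period_index (T t : R) : nat := Z.to_nat (Zfloor (t / T)).

Lemma period_index_eq (T t : R) (n : nat) :
  0 < T -> INR n * T <= t < INR n * T + T -> period_index T t = n.
Proof.
  intros HT Ht. unfold period_index.
  rewrite (Zfloor_eq (Z.of_nat n)); [apply Nat2Z.id|].
  rewrite <- INR_IZR_INZ. split.
  - apply (Rmult_le_reg_r T); [lra|]. unfold Rdiv. rewrite Rmult_assoc, Rinv_l; lra.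
  - apply (Rmult_lt_reg_r T); [lra|]. unfold Rdiv. rewrite Rmult_assoc, Rinv_l by lra. lra.
Qed.

Lemma period_index_bounds (T t : R) :
  0 < T -> 0 <= t -> INR (period_index T t) * T <= t < INR (period_index T t) * T + T.
Proof.
  intros HT Ht. unfold period_index.
  assert (Hq : 0 <= t / T) by (apply Rdiv_le_0_compat; lra).
  assert (Hz : (0 <= Zfloor (t / T))%Z) by (apply Zfloor_lub; simpl; lra).
  rewrite INR_IZR_INZ, Z2Nat.id by exact Hz.
  destruct (Zfloor_bound (t / T)) as [B1 B2].
  assert (Htt : t / T * T = t) by (field; lra).
  split; nra.
Qed.

Section Circuit.

Variables (Rr L C Vdc T : R).
Hypotheses (hR : 0 < Rr) (hL : 0 < L) (hC : 0 < C) (hT : 0 < T).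

Local Notation A1 := (Amat1 Rr L C).
Local Notation A2 := (Amat2 Rr L C).
Local Notation bb := (b1 L Vdc).

Lemma Amat1_inverse : mmul A1 (minv A1) = mI /\ mmul (minv A1) A1 = mI.
Proof.
  apply minv_inverse. unfold mdet, Amat1; simpl.
  replace (- Rr / L * 0 - - / L * / C) with (/ (L * C)) by (field; lra).
  apply Rinv_neq_0_compat. nra.
Qed.

Lemma Amat1_dissipative : dissipative L C Rr A1.
Proof. intros [x y]. unfold Amat1; simpl. field. lra. Qed.

Lemma Amat2_dissipative : dissipative L C Rr A2.
Proof. intros [x y]. unfold Amat2; simpl. field. lra. Qed.

Definition flow_on (z : Vec2) (u : R) : Vec2 := affine_flow A1 (minv A1) bb z u.
Definition flow_off (w : Vec2) (u : R) : Vec2 := mvmul (mexpt u A2) w.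
Definition period_map (z : Vec2) : Vec2 := flow_off (flow_on z (T / 2)) (T / 2).
Definition period_flow (z : Vec2) (u : R) : Vec2 :=
  if Rle_dec u (T / 2) then flow_on z u else flow_off (flow_on z (T / 2)) (u - T / 2).

Definition switched_sol (x0 : Vec2) (t : R) : Vec2 :=
  period_flow (Nat.iter (period_index T t) period_map x0) (t - INR (period_index T t) * T).

Lemma flow_on_0 (z : Vec2) : flow_on z 0 = z.
Proof. apply affine_flow_0. Qed.

Lemma flow_off_0 (w : Vec2) : flow_off w 0 = w.
Proof. unfold flow_off. rewrite mexpt_0. apply mvmul_mI. Qed.

Lemma switched_sol_on_phase (x0 : Vec2) (m : nat) (t : R) :
  INR m * T <= t <= INR m * T + T / 2 ->
  switched_sol x0 t = flow_on (Nat.iter m period_map x0) (t - INR m * T).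
Proof.
  intros Ht. unfold switched_sol. rewrite (period_index_eq T t m) by lra.
  unfold period_flow. destruct Rle_dec; [reflexivity|lra].
Qed.

Lemma switched_sol_off_phase (x0 : Vec2) (m : nat) (t : R) :
  INR m * T + T / 2 <= t <= INR m * T + T ->
  switched_sol x0 t =
  flow_off (flow_on (Nat.iter m period_map x0) (T / 2)) (t - (INR m * T + T / 2)).
Proof.
  intros Ht. unfold switched_sol.
  destruct (Rlt_or_le t (INR m * T + T)) as [Hlt|Hge].
  - rewrite (period_index_eq T t m) by lra. unfold period_flow. destruct Rle_dec.
    + replace (t - (INR m * T + T / 2)) with 0 by lra. rewrite flow_off_0.
      replace (t - INR m * T) with (T / 2) by lra. reflexivity.
    + replace (t - INR m * T - T / 2) with (t - (INR m * T + T / 2)) by ring. reflexivity.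
  - rewrite (period_index_eq T t (S m)) by (try rewrite S_INR; lra).
    replace (t - INR (S m) * T) with 0 by (try rewrite S_INR; lra).
    replace (t - (INR m * T + T / 2)) with (T / 2) by lra.
    unfold period_flow. destruct Rle_dec; [|lra]. apply flow_on_0.
Qed.

Lemma switched_sol_first_half (x0 : Vec2) (t : R) :
  0 <= t <= T / 2 -> switched_sol x0 t = flow_on x0 t.
Proof.
  intros Ht. rewrite (switched_sol_on_phase x0 0) by (simpl; lra).
  replace (t - INR 0 * T) with t by (simpl; ring). reflexivity.
Qed.

Lemma switched_sol_0 (x0 : Vec2) : switched_sol x0 0 = x0.
Proof. rewrite switched_sol_first_half by lra. apply flow_on_0. Qed.

Lemma switched_sol_second_half (x0 : Vec2) (t : R) :
  T / 2 < t <= T -> switched_sol x0 t = flow_off (switched_sol x0 (T / 2)) (t - T / 2).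
Proof.
  intros Ht. rewrite (switched_sol_off_phase x0 0), (switched_sol_first_half x0 (T / 2))
    by (simpl; lra).
  replace (t - (INR 0 * T + T / 2)) with (t - T / 2) by (simpl; ring). reflexivity.
Qed.

Definition solves_period (x : R -> Vec2) (m : nat) : Prop :=
  solves_on (INR m * T) (INR m * T + T / 2) A1 bb x /\
  solves_on (INR m * T + T / 2) (INR m * T + T) A2 vzero x.

Lemma solves_period_of_is_solution (x : R -> Vec2) :
  is_solution Rr L C Vdc T x -> forall m, solves_period x m.
Proof.
  intros [_ Hx] m. destruct (Hx (S m) ltac:(lia)) as [H1 H2].
  replace (S m - 1)%nat with m in H1, H2 by lia. rewrite S_INR in H2.
  split; [exact H1|]. replace (INR m * T + T) with ((INR m + 1) * T) by ring. exact H2.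
Qed.

Lemma solves_period_continuous_right (x : R -> Vec2) (t : R) :
  (forall m, solves_period x m) -> 0 <= t ->
  exists c, t < c /\ vcontinuous_within x (fun s => t <= s <= c) t.
Proof.
  intros Hx Ht. destruct (period_index_bounds T t hT Ht). set (m := period_index T t) in *.
  destruct (Hx m) as [Hon Hoff]. destruct (Rlt_or_le t (INR m * T + T / 2)).
  - exists (INR m * T + T / 2). split; [lra|].
    eapply vcontinuous_within_imp; [|apply (solves_on_continuous _ _ _ _ _ _ Hon); lra].
    cbv beta; intros; lra.
  - exists (INR m * T + T). split; [lra|].
    eapply vcontinuous_within_imp; [|apply (solves_on_continuous _ _ _ _ _ _ Hoff); lra].
    cbv beta; intros; lra.
Qed.

Lemma solves_period_continuous_left (x : R -> Vec2) (t : R) :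
  (forall m, solves_period x m) -> 0 <= t ->
  exists a, a < t /\ vcontinuous_within x (fun s => 0 <= s /\ a <= s <= t) t.
Proof.
  intros Hx Ht. destruct (period_index_bounds T t hT Ht). set (m := period_index T t) in *.
  destruct (Hx m) as [Hon Hoff].
  destruct (Rlt_or_le (INR m * T + T / 2) t); [|destruct (Rlt_or_le (INR m * T) t)].
  - exists (INR m * T + T / 2). split; [lra|].
    eapply vcontinuous_within_imp; [|apply (solves_on_continuous _ _ _ _ _ _ Hoff); lra].
    cbv beta; intros; lra.
  - exists (INR m * T). split; [lra|].
    eapply vcontinuous_within_imp; [|apply (solves_on_continuous _ _ _ _ _ _ Hon); lra].
    cbv beta; intros; lra.
  - destruct m as [|m'].
    + exists (t - 1). split; [lra|]. simpl in *.
      eapply vcontinuous_within_imp; [|apply (solves_on_continuous _ _ _ _ _ _ Hon); lra].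
      cbv beta; intros; lra.
    + rewrite S_INR in *. destruct (Hx m') as [_ Hoff'].
      exists (INR m' * T + T / 2). split; [lra|].
      eapply vcontinuous_within_imp; [|apply (solves_on_continuous _ _ _ _ _ _ Hoff'); lra].
      cbv beta; intros; lra.
Qed.

(* Continuity is not an extra condition: it follows from solving on every half period. *)
Lemma is_solution_of_solves_period (x : R -> Vec2) :
  (forall m, solves_period x m) -> is_solution Rr L C Vdc T x.
Proof.
  intros Hx. split.
  - intros t Ht.
    destruct (solves_period_continuous_left x t Hx Ht) as [a [Ha Hleft]].
    destruct (solves_period_continuous_right x t Hx Ht) as [c [Hc Hright]].
    exact (vcontinuous_within_glue _ _ a c t (conj Ha Hc) Hleft Hright).
  - intros k Hk. destruct k as [|m]; [lia|].
    replace (S m - 1)%nat with m by lia. rewrite S_INR.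
    replace ((INR m + 1) * T) with (INR m * T + T) by ring. exact (Hx m).
Qed.

Lemma switched_sol_solves_period (x0 : Vec2) (m : nat) : solves_period (switched_sol x0) m.
Proof.
  destruct Amat1_inverse as [HAAi HAiA]. split.
  - eapply solves_on_ext; [|exact (affine_flow_solves_on _ _ (INR m * T) _ _ bb
                                      (Nat.iter m period_map x0) HAAi HAiA)].
    intros s Hs. apply switched_sol_on_phase; lra.
  - eapply solves_on_ext; [|exact (flow_solves_on _ _ (INR m * T + T / 2) A2
                                      (flow_on (Nat.iter m period_map x0) (T / 2)))].
    intros s Hs. apply switched_sol_off_phase; lra.
Qed.

Lemma switched_sol_is_solution (x0 : Vec2) : is_solution Rr L C Vdc T (switched_sol x0).
Proof. apply is_solution_of_solves_period, switched_sol_solves_period. Qed.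

Lemma solves_period_unique (x y : R -> Vec2) (m : nat) :
  solves_period x m -> solves_period y m -> x (INR m * T) = y (INR m * T) ->
  forall t, INR m * T <= t <= INR m * T + T -> x t = y t.
Proof.
  intros [Xon Xoff] [Yon Yoff] H0.
  assert (Hon : forall t, INR m * T <= t <= INR m * T + T / 2 -> x t = y t)
    by exact (solves_on_unique L C Rr A1 hL hC hR Amat1_dissipative _ _ _ _ _ Xon Yon H0).
  intros t Ht. destruct (Rle_or_lt t (INR m * T + T / 2)); [apply Hon; lra|].
  apply (solves_on_unique L C Rr A2 hL hC hR Amat2_dissipative _ _ _ _ _ Xoff Yoff); [|lra].
  apply Hon; lra.
Qed.

Lemma is_solution_unique (x y : R -> Vec2) :
  is_solution Rr L C Vdc T x -> is_solution Rr L C Vdc T y -> x 0 = y 0 ->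
  forall t, 0 <= t -> x t = y t.
Proof.
  intros Hx Hy H0.
  pose proof (solves_period_of_is_solution x Hx) as Px.
  pose proof (solves_period_of_is_solution y Hy) as Py.
  assert (Hgrid : forall m, x (INR m * T) = y (INR m * T)).
  { induction m as [|m IH]; [simpl; rewrite Rmult_0_l; exact H0|].
    rewrite S_INR, Rmult_plus_distr_r, Rmult_1_l.
    apply (solves_period_unique x y m (Px m) (Py m) IH). lra. }
  intros t Ht. pose proof (period_index_bounds T t hT Ht).
  apply (solves_period_unique x y _ (Px _) (Py _) (Hgrid (period_index T t))). lra.
Qed.

Lemma solution_eq_switched_sol (y : R -> Vec2) :
  is_solution Rr L C Vdc T y -> forall t, 0 <= t -> y t = switched_sol (y 0) t.
Proof.
  intros Hy. apply (is_solution_unique _ _ Hy (switched_sol_is_solution (y 0))).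
  symmetry. apply switched_sol_0.
Qed.

Lemma switched_sol_periodic (z : Vec2) :
  period_map z = z -> T_periodic T (switched_sol z).
Proof.
  intros Hz t Ht. destruct (period_index_bounds T t hT Ht). unfold switched_sol.
  rewrite (period_index_eq T (t + T) (S (period_index T t))) by (try rewrite S_INR; lra).
  assert (Hiter : forall m, Nat.iter m period_map z = z)
    by (induction m as [|m IH]; [reflexivity|simpl; rewrite IH; exact Hz]).
  rewrite !Hiter, S_INR. f_equal. ring.
Qed.

Lemma periodic_solution_fixed (y : R -> Vec2) :
  is_solution Rr L C Vdc T y -> T_periodic T y -> period_map (y 0) = y 0.
Proof.
  intros Hy Hper.
  rewrite <- (Hper 0) at 2 by lra. rewrite Rplus_0_l, (solution_eq_switched_sol y Hy T) by lra.
  rewrite (switched_sol_off_phase _ 0) by (simpl; lra). simpl Nat.iter.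
  replace (T - (INR 0 * T + T / 2)) with (T / 2) by (simpl; field). reflexivity.
Qed.

Definition monodromy : Mat2 := mmul (mexpt (T / 2) A2) (mexpt (T / 2) A1).

Definition period_offset : Vec2 :=
  mvmul (mexpt (T / 2) A2) (mvmul (minv A1) (mvmul (msub (mexpt (T / 2) A1) mI) bb)).

Lemma period_map_affine (z : Vec2) : period_map z = vadd (mvmul monodromy z) period_offset.
Proof.
  unfold period_map, flow_off, flow_on, affine_flow, monodromy, period_offset.
  apply Vec2_ext; simpl; ring.
Qed.

Lemma period_map_fixed_iff (z : Vec2) :
  period_map z = z <-> mvmul (msub mI monodromy) z = period_offset.
Proof.
  rewrite period_map_affine, mvmul_msub, mvmul_mI.
  split; intros H; rewrite <- H at 1; apply Vec2_ext; simpl; ring.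
Qed.

Lemma monodromy_energy_lt (z : Vec2) :
  z <> vzero -> energy L C (mvmul monodromy z) < energy L C z.
Proof.
  intros Hz. unfold monodromy. rewrite mvmul_mmul.
  eapply Rle_lt_trans; [apply (energy_flow_le L C Rr); auto using Amat2_dissipative; lra|].
  apply (energy_flow_lt L C Rr); auto using Amat1_dissipative; [|lra].
  unfold Amat1; simpl. apply Ropp_neq_0_compat, Rinv_neq_0_compat. lra.
Qed.

Lemma monodromy_det_neq0 : mdet (msub mI monodromy) <> 0.
Proof.
  apply mdet_neq0. intros z Hz.
  rewrite mvmul_msub, mvmul_mI in Hz.
  assert (Hfix : mvmul monodromy z = z).
  { apply Vec2_ext; [apply (f_equal v1) in Hz|apply (f_equal v2) in Hz]; simpl in *; lra. }
  destruct (classic (z = vzero)) as [|Hne]; [assumption|].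
  pose proof (monodromy_energy_lt z Hne). rewrite Hfix in H. lra.
Qed.

Lemma period_map_fixed_point :
  period_map (mvmul (minv (msub mI monodromy)) period_offset) =
  mvmul (minv (msub mI monodromy)) period_offset.
Proof.
  apply period_map_fixed_iff. destruct (minv_inverse _ monodromy_det_neq0) as [HM _].
  rewrite <- mvmul_mmul, HM. apply mvmul_mI.
Qed.

Lemma period_map_fixed_unique (z : Vec2) :
  period_map z = z -> z = mvmul (minv (msub mI monodromy)) period_offset.
Proof.
  rewrite period_map_fixed_iff. intros Hz.
  destruct (minv_inverse _ monodromy_det_neq0) as [_ HM].
  rewrite <- Hz, <- mvmul_mmul, HM, mvmul_mI. reflexivity.
Qed.

Lemma periodic_solution_unique (y : R -> Vec2) :
  is_solution Rr L C Vdc T y -> T_periodic T y ->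
  forall t, 0 <= t -> y t = switched_sol (mvmul (minv (msub mI monodromy)) period_offset) t.
Proof.
  intros Hy Hper t Ht.
  rewrite (solution_eq_switched_sol y Hy t Ht).
  rewrite <- (period_map_fixed_unique (y 0) (periodic_solution_fixed y Hy Hper)).
  reflexivity.
Qed.

Lemma iter_period_map_energy_le (rho : R) (x0 y0 : Vec2) :
  0 <= rho -> (forall z, energy L C (mvmul monodromy z) <= rho * energy L C z) ->
  forall m, energy L C (vsub (Nat.iter m period_map x0) (Nat.iter m period_map y0))
            <= rho ^ m * energy L C (vsub x0 y0).
Proof.
  intros Hr Hc m. induction m as [|m IH]; [simpl; lra|].
  rewrite !Nat.iter_succ, !period_map_affine. change (rho ^ S m) with (rho * rho ^ m).
  set (a := Nat.iter m period_map x0) in *. set (b := Nat.iter m period_map y0) in *.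
  replace (vsub (vadd (mvmul monodromy a) period_offset) (vadd (mvmul monodromy b) period_offset))
    with (mvmul monodromy (vsub a b)) by (apply Vec2_ext; simpl; ring).
  eapply Rle_trans; [apply Hc|]. rewrite Rmult_assoc. apply Rmult_le_compat_l; assumption.
Qed.

Lemma switched_sol_energy_le (x0 y0 : Vec2) (t : R) : 0 <= t ->
  energy L C (vsub (switched_sol x0 t) (switched_sol y0 t)) <=
  energy L C (vsub (Nat.iter (period_index T t) period_map x0)
                   (Nat.iter (period_index T t) period_map y0)).
Proof.
  intros Ht. destruct (period_index_bounds T t hT Ht). set (m := period_index T t) in *.
  set (a := Nat.iter m period_map x0). set (b := Nat.iter m period_map y0).
  destruct (Rle_or_lt t (INR m * T + T / 2)).
  - rewrite !(switched_sol_on_phase _ m) by lra. fold a b.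
    replace (vsub (flow_on a (t - INR m * T)) (flow_on b (t - INR m * T)))
      with (mvmul (mexpt (t - INR m * T) A1) (vsub a b))
      by (unfold flow_on, affine_flow; apply Vec2_ext; simpl; ring).
    apply (energy_flow_le L C Rr); auto using Amat1_dissipative. lra.
  - rewrite !(switched_sol_off_phase _ m) by lra. fold a b.
    replace (vsub (flow_off (flow_on a (T / 2)) (t - (INR m * T + T / 2)))
                  (flow_off (flow_on b (T / 2)) (t - (INR m * T + T / 2))))
      with (mvmul (mexpt (t - (INR m * T + T / 2)) A2) (mvmul (mexpt (T / 2) A1) (vsub a b)))
      by (unfold flow_off, flow_on, affine_flow; apply Vec2_ext; simpl; ring).
    eapply Rle_trans; apply (energy_flow_le L C Rr);
      auto using Amat1_dissipative, Amat2_dissipative; lra.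
Qed.

Lemma switched_sol_attractive (x0 y0 : Vec2) (eps : R) : 0 < eps ->
  exists t0, forall t, t0 <= t -> vnorm (vsub (switched_sol x0 t) (switched_sol y0 t)) < eps.
Proof.
  intros Heps.
  destruct (energy_contraction L C monodromy hL hC monodromy_energy_lt)
    as [rho [[Hr0 Hr1] Hrho]].
  set (K0 := energy L C (vsub x0 y0)).
  assert (HK0 : 0 <= K0) by (apply energy_nonneg; lra).
  assert (Hbound : 0 < Rmin L C * eps ^ 2 / (K0 + 1)).
  { apply Rdiv_lt_0_compat; [apply Rmult_lt_0_compat; [apply Rmin_glb_lt|apply pow_lt]|]; lra. }
  destruct (pow_lt_1_zero rho ltac:(rewrite Rabs_right; lra) _ Hbound) as [N HN].
  exists (INR N * T). intros t Ht.
  assert (Ht0 : 0 <= t) by (pose proof (pos_INR N); nra).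
  destruct (period_index_bounds T t hT Ht0) as [_ Hm]. set (m := period_index T t) in *.
  assert (HNm : (N <= m)%nat).
  { assert (INR N < INR (S m)) by (rewrite S_INR; nra). apply INR_lt in H. lia. }
  specialize (HN m HNm). rewrite Rabs_right in HN by (apply Rle_ge, pow_le; lra).
  apply (vnorm_lt_of_energy_lt L C); [lra|lra|exact Heps|].
  eapply Rle_lt_trans; [apply (switched_sol_energy_le x0 y0 t Ht0)|].
  eapply Rle_lt_trans; [apply (iter_period_map_energy_le rho x0 y0 Hr0 Hrho)|]. fold K0.
  apply Rle_lt_trans with (rho ^ m * (K0 + 1)); [apply Rmult_le_compat_l; [apply pow_le|]; lra|].
  apply (Rmult_lt_compat_r (K0 + 1)) in HN; [|lra].
  replace (Rmin L C * eps ^ 2 / (K0 + 1) * (K0 + 1)) with (Rmin L C * eps ^ 2) in HN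
    by (field; lra). exact HN.
Qed.

Lemma solutions_converge (x y : R -> Vec2) :
  is_solution Rr L C Vdc T x -> is_solution Rr L C Vdc T y ->
  forall eps, 0 < eps -> exists t0, forall t, t0 <= t -> vnorm (vsub (x t) (y t)) < eps.
Proof.
  intros Hx Hy eps Heps.
  destruct (switched_sol_attractive (x 0) (y 0) eps Heps) as [t0 Ht0].
  exists (Rmax t0 0). intros t Ht. pose proof (Rmax_l t0 0); pose proof (Rmax_r t0 0).
  rewrite (solution_eq_switched_sol x Hx t), (solution_eq_switched_sol y Hy t) by lra.
  apply Ht0. lra.
Qed.

End Circuit.

Theorem theorem1 (Rr L C Vdc T : R)
  (hR : 0 < Rr) (hL : 0 < L) (hC : 0 < C) (hV : 0 < Vdc) (hT : 0 < T) :
  let M := msub mI (mmul (mexpt (T / 2) (Amat2 Rr L C)) (mexpt (T / 2) (Amat1 Rr L C))) in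
  let xp0 := mvmul (minv M)
               (mvmul (mexpt (T / 2) (Amat2 Rr L C))
                 (mvmul (minv (Amat1 Rr L C))
                   (mvmul (msub (mexpt (T / 2) (Amat1 Rr L C)) mI) (b1 L Vdc)))) in
  minvertible M /\
  exists xp : R -> Vec2,
    is_solution Rr L C Vdc T xp /\ T_periodic T xp /\
    (forall y : R -> Vec2, is_solution Rr L C Vdc T y -> T_periodic T y ->
       forall t, 0 <= t -> y t = xp t) /\
    xp 0 = xp0 /\
    (forall t, 0 <= t <= T / 2 ->
       xp t = vadd (mvmul (mexpt t (Amat1 Rr L C)) (xp 0))
                   (mvmul (minv (Amat1 Rr L C))
                      (mvmul (msub (mexpt t (Amat1 Rr L C)) mI) (b1 L Vdc)))) /\
    (forall t, T / 2 < t <= T ->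
       xp t = mvmul (mexpt (t - T / 2) (Amat2 Rr L C)) (xp (T / 2))) /\
    (forall x0 : Vec2,
       (exists x : R -> Vec2, is_solution Rr L C Vdc T x /\ x 0 = x0) /\
       (forall x : R -> Vec2, is_solution Rr L C Vdc T x -> x 0 = x0 ->
          forall eps, 0 < eps -> exists t0, forall t, t0 <= t ->
            vnorm (vsub (x t) (xp t)) < eps)).
Proof.
  intros M xp0.
  pose proof (switched_sol_is_solution Rr L C Vdc T hL hC hT) as Hsol.
  split; [exists (minv M); exact (minv_inverse _ (monodromy_det_neq0 Rr L C T hR hL hC hT))|].
  exists (switched_sol Rr L C Vdc T xp0).
  split; [apply Hsol|].
  split; [exact (switched_sol_periodic Rr L C Vdc T hT xp0
                   (period_map_fixed_point Rr L C Vdc T hR hL hC hT))|].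
  split; [exact (periodic_solution_unique Rr L C Vdc T hR hL hC hT)|].
  split; [exact (switched_sol_0 Rr L C Vdc T hT xp0)|].
  split.
  { intros t Ht. rewrite (switched_sol_0 Rr L C Vdc T hT xp0).
    exact (switched_sol_first_half Rr L C Vdc T hT xp0 t Ht). }
  split; [exact (switched_sol_second_half Rr L C Vdc T hT xp0)|].
  intros x0. split; [exists (switched_sol Rr L C Vdc T x0); auto using switched_sol_0|].
  intros x Hx _. exact (solutions_converge Rr L C Vdc T hR hL hC hT x _ Hx (Hsol xp0)).
Qed.
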